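(* For every vertex $\mathbf{x}$ of $P^n_{\mathrm{SEP}}$, the optimal values of the linear programs $\mathcal{D}\mathrm{OPT}^{\mathrm{I}}(\mathbf{x})$ and $\mathcal{D}\mathrm{OPT}^+(\mathbf{x})$ coincide.
   Context: $K_n=(V_n,E_n)$ is the complete undirected graph on $n$ nodes; $\delta(S)$ is the set of edges with exactly one endpoint in $S$. $P^n_{\mathrm{SEP}}=\{\mathbf{x}\in\mathbb{R}^{E_n} : \sum_{e\in\delta(v)}x_e=2\ \forall v;\ \sum_{e\in\delta(S)}x_e\ge 2\ \forall S \text{ with } 3\le|S|\le n-3;\ 0\le x_e\le 1\}$; a vertex is an extreme point. A tour is a Hamiltonian cycle of $K_n$, identified with its 0/1 characteristic vector $\mathbf{t}$. A walk on $K_n$ is a closed walk visiting every node at least once, identified with its characteristic vector $\mathbf{w}$ ($w_{ij}$ = number of traversals of edge $ij$); only walks with $w_{ij}\in\{0,1,2\}$ for all edges are considered. Edges are unordered ($ij=ji$), so $\lambda_{ijk}$ and $\lambda_{jik}$ denote the same variable (but $\lambda_{ijk}\ne\lambda_{kji}$). $\mathcal{D}\mathrm{OPT}^+(\mathbf{x})$: maximize $\sum_{\mathbf{t}\text{ tour}}\mu_{\mathbf{t}}$ subject to $\sum_{k\ne i,j}(-\lambda_{ijk}+\lambda_{ikj}+\lambda_{jki})+\sum_{\mathbf{t}}t_{ij}\mu_{\mathbf{t}}\le x_{ij}$ for all $ij\in E_n$, $\lambda_{ijk}\ge0$ for all $ij\in E_n$, $k\in V_n\setminus\{i,j\}$,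 $\mu_{\mathbf{t}}\ge0$. $\mathcal{D}\mathrm{OPT}^{\mathrm{I}}(\mathbf{x})$: the same program with tours replaced by walks on $K_n$, i.e. maximize $\sum_{\mathbf{w}}\mu_{\mathbf{w}}$ subject to $\sum_{k\ne i,j}(-\lambda_{ijk}+\lambda_{ikj}+\lambda_{jki})+\sum_{\mathbf{w}}w_{ij}\mu_{\mathbf{w}}\le x_{ij}$ for all $ij\in E_n$, $\lambda\ge0$, $\mu_{\mathbf{w}}\ge0$ for all walks $\mathbf{w}$ on $K_n$. *)

From HB Require Import structures.
From mathcomp Require Import all_boot all_order all_algebra.
From mathcomp Require Import boolp reals.
Set Implicit Arguments. Unset Strict Implicit. Unset Printing Implicit Defensive.
Import Order.TTheory GRing.Theory Num.Theory.
Local Open Scope ring_scope.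

Definition edge (n : nat) := {e : {set 'I_n} | #|e| == 2%N}.

(* Characteristic (traversal-count) vector of the closed walk
   s = [:: v_0; ...; v_{m-1}] (returning from v_{m-1} to v_0):
   number of indices i with {v_i, v_{i+1 mod m}} = e. *)
Definition walk_count (n : nat) (s : seq 'I_n) (e : edge n) : nat :=
  count (fun p : 'I_n * 'I_n => [set p.1; p.2] == val e) (zip s (rot 1 s)).

Definition is_walk (n : nat) (w : {ffun edge n -> 'I_3}) : Prop :=
  exists s : seq 'I_n,
    [/\ cycle (fun a b : 'I_n => a != b) s,
        (forall v : 'I_n, v \in s) &
        (forall e : edge n, (w e : nat) = walk_count s e)].

Definition is_tour (n : nat) (t : {ffun edge n -> 'I_3}) : Prop :=
  exists s : seq 'I_n,
    [/\ (3 <= size s)%N, uniq s,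
        (forall v : 'I_n, v \in s) &
        (forall e : edge n, (t e : nat) = walk_count s e)].

Definition at2 (n : nat) (T : Type) (d : T) (f : edge n -> T) (i j : 'I_n) : T :=
  oapp f d (insub [set i; j] : option (edge n)).

Definition in_SEP (R : realType) (n : nat) (x : edge n -> R) : Prop :=
  [/\ (forall v : 'I_n, \sum_(e : edge n | v \in val e) x e = 2),
      (forall S : {set 'I_n}, (3 <= #|S| <= n - 3)%N ->
         2 <= \sum_(e : edge n | #|val e :&: S| == 1%N) x e) &
      (forall e : edge n, 0 <= x e <= 1)].

Definition is_SEP_vertex (R : realType) (n : nat) (x : edge n -> R) : Prop :=
  in_SEP x /\
  forall (y z : edge n -> R) (c : R), in_SEP y -> in_SEP z -> 0 < c < 1 ->
    (forall e, x e = c * y e + (1 - c) * z e) -> forall e, y e = z e.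

(* The LP  DOPT_V(x): maximize sum_{w in V} mu_w subject to
   sum_{k <> i,j} (-lam_ijk + lam_ikj + lam_jki) + sum_{w in V} w_ij mu_w <= x_ij
   for all ij, lam >= 0, mu >= 0, where V is the class of vectors
   (tours for DOPT^+, walks for DOPT^I).  lam_{ijk} is lam e k with e = {i,j}. *)
Definition DOPT_feasible (R : realType) (n : nat)
    (V : {ffun edge n -> 'I_3} -> Prop) (x : edge n -> R)
    (lam : edge n -> 'I_n -> R) (mu : {ffun edge n -> 'I_3} -> R) : Prop :=
  [/\ (forall (i j : 'I_n), i != j ->
         \sum_(k : 'I_n | (k != i) && (k != j))
            (- at2 0 (fun e => lam e k) i j
             + at2 0 (fun e => lam e j) i k
             + at2 0 (fun e => lam e i) j k)
         + \sum_(w | `[< V w >]) ((at2 0%N (fun e => (w e : nat)) i j)%:R * mu w)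
         <= at2 0 x i j),
      (forall (e : edge n) (k : 'I_n), k \notin val e -> 0 <= lam e k) &
      (forall w, V w -> 0 <= mu w)].

Definition DOPT_objective (R : realType) (n : nat)
    (V : {ffun edge n -> 'I_3} -> Prop) (mu : {ffun edge n -> 'I_3} -> R) : R :=
  \sum_(w | `[< V w >]) mu w.

Definition DOPT_opt_value (R : realType) (n : nat)
    (V : {ffun edge n -> 'I_3} -> Prop) (x : edge n -> R) (v : R) : Prop :=
  (exists lam mu, DOPT_feasible V x lam mu /\ DOPT_objective V mu = v) /\
  (forall lam mu, DOPT_feasible V x lam mu -> DOPT_objective V mu <= v).

From HB Require Import structures.
From mathcomp Require Import all_boot all_order all_algebra.
From mathcomp Require Import boolp reals classical_sets topology normedtype derive.
From mathcomp Require Import lra zify.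
Set Implicit Arguments. Unset Strict Implicit. Unset Printing Implicit Defensive.
Import Order.TTheory GRing.Theory Num.Theory numFieldNormedType.Exports.
Local Open Scope ring_scope.

(* If a closed walk visits a node k twice, drop one visit: with b and a the
   neighbours of that visit, the edges bk and ka are replaced by ba, and the
   change of the edge vector is exactly the contribution of the multiplier
   lam_(ab,k) to the constraints of DOPT.  A backtrack a k a is removed with the
   two multipliers lam_(ac,k) and lam_(kc,a) through a third node c, which
   exists because n >= 3.  Hence every walk vector is a tour vector plus the
   contribution of some lam >= 0, so moving the weight of each walk to its tour
   and adding the multipliers to lam turns a solution of DOPT^I into a solution
   of DOPT^+ of the same value; conversely tours are walks.  The common optimum
   is attained: summing all constraints bounds every variable that occurs in
   them by the total weight of x, so after zeroing the other coordinates the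
   feasible region of DOPT^I is compact. *)

Section CyclicPairs.
Variable T : Type.
Implicit Types s : seq T.

Definition cyc_pairs s := zip s (rot 1 s).

Lemma take_zip (U : Type) r s (t : seq U) :
  take r (zip s t) = zip (take r s) (take r t).
Proof. by elim: s t r => [|x s IHs] [|y t] [|r] //=; rewrite IHs. Qed.

Lemma drop_zip (U : Type) r s (t : seq U) :
  drop r (zip s t) = zip (drop r s) (drop r t).
Proof. by elim: s t r => [|x s IHs] [|y t] [|r] //=; rewrite ?IHs //; case: (drop _ _). Qed.

Lemma zip_rot (U : Type) r s (t : seq U) : size s = size t ->
  zip (rot r s) (rot r t) = rot r (zip s t).
Proof.
by move=> eq_st; rewrite /rot zip_cat ?drop_zip ?take_zip // !size_drop eq_st.
Qed.

Lemma cyc_pairs_rot r s : cyc_pairs (rot r s) = rot r (cyc_pairs s).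
Proof. by rewrite /cyc_pairs rot_rot zip_rot // size_rot. Qed.

Lemma cyc_pairs_cons x s :
  cyc_pairs (x :: s) = rcons (zip (belast x s) s) (last x s, x).
Proof. by rewrite /cyc_pairs rot1_cons lastI zip_rcons // size_belast. Qed.

End CyclicPairs.

Section EdgeMultiplicity.
Variable n : nat.
Implicit Types (s m : seq 'I_n) (a i j k : 'I_n).

Definition edge_mult s i j : nat :=
  count (fun p : 'I_n * 'I_n => [set p.1; p.2] == [set i; j]) (cyc_pairs s).

Lemma edge_mult_rot r s i j : edge_mult (rot r s) i j = edge_mult s i j.
Proof.
have perm_pairs : perm_eq (cyc_pairs (rot r s)) (cyc_pairs s).
  by rewrite cyc_pairs_rot perm_rot.
exact: permP perm_pairs _.
Qed.

Lemma edge_mult_insert k a m i j :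
  (edge_mult (k :: a :: m) i j + ([set last a m; a] == [set i; j]) =
   edge_mult (a :: m) i j + ([set last a m; k] == [set i; j])
     + ([set k; a] == [set i; j]))%N.
Proof.
by rewrite /edge_mult !cyc_pairs_cons -!cats1 !count_cat /=; lia.
Qed.

Lemma edge_mult_rcons_head a m i j :
  edge_mult (a :: rcons m a) i j =
  (edge_mult (a :: m) i j + ([set a; a] == [set i; j]))%N.
Proof.
rewrite /edge_mult (cyc_pairs_cons a (rcons m a)) belast_rcons last_rcons.
by rewrite /cyc_pairs rot1_cons -cats1 count_cat /= addn0.
Qed.

End EdgeMultiplicity.

Definition vec_at n (w : {ffun edge n -> 'I_3}) (i j : 'I_n) : nat :=
  at2 0%N (fun e => (w e : nat)) i j.

Section Loads.
Variables (R : realType) (n : nat).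
Implicit Types (i j k : 'I_n) (f g : edge n -> R) (lam : edge n -> 'I_n -> R).

Lemma at2_val (T : Type) (d : T) (f : edge n -> T) (e : edge n) i j :
  val e = [set i; j] -> at2 d f i j = f e.
Proof.
move=> e_ij; rewrite /at2; case: insubP => [e' _ e'_ij | ]; last by rewrite -e_ij (valP e).
by congr f; apply: val_inj; rewrite e'_ij e_ij.
Qed.

Lemma at2_ext (T : Type) (d : T) (f g : edge n -> T) i j :
  (forall e, val e = [set i; j] -> f e = g e) -> at2 d f i j = at2 d g i j.
Proof. by move=> eq_fg; rewrite /at2; case: insubP => [e _ e_ij|] //=; rewrite eq_fg. Qed.

Lemma at2_cst (T : Type) (d : T) i j : at2 d (fun _ => d) i j = d.
Proof. by rewrite /at2; case: insub. Qed.

Lemma at2D f g i j : at2 0 (f \+ g) i j = at2 0 f i j + at2 0 g i j.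
Proof. by rewrite /at2; case: insubP => [e _ _|_] /=; rewrite ?addr0. Qed.

Lemma at2Ml (c : R) f i j : at2 0 (fun e => c * f e) i j = c * at2 0 f i j.
Proof. by rewrite /at2; case: insubP => [e _ _|_] /=; rewrite ?mulr0. Qed.

Lemma at2_sum (I : finType) (P : pred I) (F : I -> edge n -> R) i j :
  at2 0 (fun e => \sum_(w | P w) F w e) i j = \sum_(w | P w) at2 0 (F w) i j.
Proof. by rewrite /at2; case: insubP => [e _ _|_] //=; rewrite big1_eq. Qed.

Lemma at2_indicator (S : {set 'I_n}) (b : bool) i j : #|S| = 2%N ->
  at2 0 (fun e : edge n => ((val e == S) && b)%:R : R) i j = (([set i; j] == S) && b)%:R.
Proof.
move=> card_S; rewrite /at2; case: insubP => [e _ e_ij | ] /=; first by rewrite e_ij.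
by move=> card_ij; case: eqP => // eq_S; rewrite eq_S card_S in card_ij.
Qed.

Definition lam_load lam i j : R :=
  \sum_(k | (k != i) && (k != j))
     (- at2 0 (fun e => lam e k) i j
      + at2 0 (fun e => lam e j) i k
      + at2 0 (fun e => lam e i) j k).

Definition mu_load (V : {ffun edge n -> 'I_3} -> Prop)
    (mu : {ffun edge n -> 'I_3} -> R) i j : R :=
  \sum_(w | `[< V w >]) ((vec_at w i j)%:R * mu w).

Definition lam_nonneg lam := forall (e : edge n) k, k \notin val e -> 0 <= lam e k.

Lemma DOPT_feasibleE V x lam mu : DOPT_feasible V x lam mu =
  [/\ forall i j, i != j -> lam_load lam i j + mu_load V mu i j <= at2 0 x i j,
      lam_nonneg lam & forall w, V w -> 0 <= mu w].
Proof. by []. Qed.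

Lemma lam_load0 i j : lam_load (fun _ _ => 0) i j = 0.
Proof. by rewrite /lam_load big1 // => k _; rewrite !at2_cst oppr0 !addr0. Qed.

Lemma lam_loadD lam1 lam2 i j :
  lam_load (fun e k => lam1 e k + lam2 e k) i j = lam_load lam1 i j + lam_load lam2 i j.
Proof.
rewrite /lam_load -big_split /=; apply: eq_bigr => k _.
rewrite !(at2D (fun e => lam1 e _) (fun e => lam2 e _)); lra.
Qed.

Lemma lam_load_sum (I : finType) (P : pred I) (c : I -> R)
    (L : I -> edge n -> 'I_n -> R) i j :
  lam_load (fun e k => \sum_(w | P w) c w * L w e k) i j =
  \sum_(w | P w) c w * lam_load (L w) i j.
Proof.
under [RHS]eq_bigr => w _ do rewrite /lam_load big_distrr.
rewrite /lam_load exchange_big /=; apply: eq_bigr => k _.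
rewrite !(at2_sum P (fun w e => c w * L w e _)) -sumrN -!big_split /=.
by apply: eq_bigr => w _; rewrite !(at2Ml (c w) (fun e => L w e _)); lra.
Qed.

Definition unit_lam (a b c : 'I_n) : edge n -> 'I_n -> R :=
  fun e k => ((val e == [set a; b]) && (k == c))%:R.

Lemma unit_lam_nonneg a b c : lam_nonneg (unit_lam a b c).
Proof. by move=> e k _; rewrite ler0n. Qed.

End Loads.

Lemma sumr_and_eq (R : pzSemiRingType) (I : finType) (C : pred I) (b : bool) (c : I) :
  \sum_(k | C k) ((b && (k == c))%:R : R) = (b && C c)%:R.
Proof.
rewrite big_mkcond (bigD1 c) //= big1 => [|k /negPf ->]; last by rewrite andbF if_same.
by rewrite eqxx andbT addr0; case: (C c); case: b.
Qed.

Lemma set2_eq n (x y a b : 'I_n) : a != b ->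
  ([set x; y] == [set a; b]) = ((x == a) && (y == b)) || ((x == b) && (y == a)).
Proof.
move=> ab; apply/eqP/idP => [/setP eq_xy|].
  have := eq_xy a; have := eq_xy b; have := eq_xy x; have := eq_xy y.
  by rewrite !inE !eqxx /= ?orbT; move: ab; do ![case: eqP => //= ?; subst].
by case/orP => /andP [/eqP -> /eqP ->] //; rewrite finset.setUC.
Qed.

Lemma lam_load_unit (R : realType) n (a b c i j : 'I_n) :
  a != b -> c != a -> c != b -> i != j ->
  lam_load (unit_lam R a b c) i j =
  - ([set a; b] == [set i; j])%:R + ([set a; c] == [set i; j])%:R
  + ([set b; c] == [set i; j])%:R.
Proof.
move=> ab ca cb ij.
have [ba ac bc] : [/\ b != a, a != c & b != c] by split; rewrite eq_sym.
have card_ab : #|[set a; b]| = 2%N by rewrite cards2 ab.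
have split_or (X Y Z : bool) (k u v : 'I_n) : u != v ->
    ((((X && (k == u)) || (Y && (k == v))) && Z)%:R : R) =
    ((X && Z) && (k == u))%:R + ((Y && Z) && (k == v))%:R.
  move=> uv; case: (k =P u) => [->|_]; [rewrite (negbTE uv)|];
  by case: X; case: Y; case: Z; rewrite /= ?andbT ?andbF ?mulr0n ?mulr1n ?addr0 ?add0r.
rewrite /lam_load; under eq_bigr => k _ do rewrite !at2_indicator // !set2_eq //.
rewrite (eq_sym [set a; b]) (eq_sym [set a; c]) (eq_sym [set b; c]) !set2_eq //.
rewrite !big_split /= sumrN sumr_and_eq.
under eq_bigr => k _ do rewrite !(split_or _ _ _ _ _ _ ba).
under [X in _ + X]eq_bigr => k _ do rewrite !(split_or _ _ _ _ _ _ ba).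
rewrite !big_split /= !sumr_and_eq.
move: ab ca cb ij; rewrite ![c == _]eq_sym.
by do ![case: eqP => //= ?; subst]; rewrite /= ?mulr0n ?mulr1n; lra.
Qed.

Lemma not_uniq_rot (T : eqType) (s : seq T) :
  ~~ uniq s -> exists r k t, rot r s = k :: t /\ k \in t.
Proof.
case: s => [//|x0 s0] /(uniqPn x0) [i [j [lt_ij lt_j eq_ij]]].
set s := x0 :: s0 in lt_j eq_ij *.
have lt_i : (i < size s)%N by apply: ltn_trans lt_j.
exists i, (nth x0 s i), (drop i.+1 s ++ take i s).
split; first by rewrite /rot (drop_nth x0 lt_i).
rewrite mem_cat eq_ij -(subnKC lt_ij) -nth_drop mem_nth //.
by rewrite size_drop; lia.
Qed.

Lemma exists_third n (a b : 'I_n) : (2 < n)%N -> exists c : 'I_n, (c != a) && (c != b).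
Proof.
move=> n_gt2; have : (0 < #|~: [set a; b]|)%N.
  by have := cardsC [set a; b]; rewrite card_ord; have := cards2 a b; lia.
by case/card_gt0P => c; rewrite !inE negb_or; exists c.
Qed.

Section Shortcutting.
Variables (R : realType) (n : nat).
Implicit Types (s t m : seq 'I_n) (a c k : 'I_n).

Definition covering_walk s := cycle (fun a b : 'I_n => a != b) s /\ forall v, v \in s.

Definition shortcuts_to s s' := exists lam : edge n -> 'I_n -> R, lam_nonneg lam /\
  forall i j, i != j -> (edge_mult s i j)%:R = (edge_mult s' i j)%:R + lam_load lam i j.

Lemma shortcuts_to_eq s s' :
  (forall i j, edge_mult s i j = edge_mult s' i j) -> shortcuts_to s s'.
Proof.
by move=> eq_ss'; exists (fun _ _ => 0); split=> [//|i j _]; rewrite lam_load0 addr0 eq_ss'.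
Qed.

Lemma shortcuts_to_trans s1 s2 s3 :
  shortcuts_to s1 s2 -> shortcuts_to s2 s3 -> shortcuts_to s1 s3.
Proof.
move=> [lam1 [ge0_1 eq_12]] [lam2 [ge0_2 eq_23]].
exists (fun e k => lam1 e k + lam2 e k); split=> [e k ke | i j ij].
  by rewrite addr_ge0 ?ge0_1 ?ge0_2.
by rewrite lam_loadD eq_12 // eq_23 //; lra.
Qed.

Lemma shortcuts_to_skip k a m : k != a -> k != last a m -> last a m != a ->
  shortcuts_to (k :: a :: m) (a :: m).
Proof.
set b := last a m => ka kb ba; have ab : a != b by rewrite eq_sym.
exists (unit_lam R a b k); split=> [|i j ij]; first exact: unit_lam_nonneg.
rewrite lam_load_unit //.
have /(congr1 (fun N => N%:R : R)) := edge_mult_insert k a m i j.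
rewrite [edge_mult]lock !natrD -lock -/b.
by rewrite (finset.setUC [set b]) (finset.setUC [set k]); lra.
Qed.

Lemma shortcuts_to_backtrack k a c m : k != a -> c != a -> c != k ->
  shortcuts_to (k :: a :: rcons m a) (a :: m).
Proof.
move=> ka ca ck; have [ac ak kc] : [/\ a != c, a != k & k != c] by split; rewrite eq_sym.
exists (fun e l => unit_lam R a c k e l + unit_lam R k c a e l).
split=> [e l le | i j ij]; first by rewrite addr_ge0 ?unit_lam_nonneg.
rewrite lam_loadD !lam_load_unit //.
have /(congr1 (fun N => N%:R : R)) := edge_mult_insert k a (rcons m a) i j.
rewrite last_rcons edge_mult_rcons_head [edge_mult]lock !natrD -lock.
rewrite (finset.setUC [set k]) (finset.setUC [set c] [set k]) (finset.setUC [set c] [set a]).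
lra.
Qed.

Lemma covering_walk_rot r s : covering_walk s -> covering_walk (rot r s).
Proof. by case=> cyc_s cover_s; split=> [|v]; rewrite ?rot_cycle ?mem_rot. Qed.

Lemma shortcut_repeated k t : (2 < n)%N -> covering_walk (k :: t) -> k \in t ->
  exists2 s, covering_walk s /\ (size s < size (k :: t))%N & shortcuts_to (k :: t) s.
Proof.
case: t => [//|a m] n_gt2 [cyc_kam cover_kam] k_am.
move: cyc_kam; rewrite /= => /andP[ka].
rewrite (rcons_path _ a m k) => /andP[path_am last_k].
have cover_am v : v \in a :: m.
  by move: (cover_kam v); rewrite in_cons => /predU1P[->|].
have [last_a | last_na] := eqVneq (last a m) a; last first.
  exists (a :: m); last by apply: shortcuts_to_skip; rewrite // eq_sym.
  by do 2?split=> //=; rewrite rcons_path path_am.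
case/lastP: m => [|m z] in k_am cover_kam cover_am path_am last_k last_a *.
  by move: k_am; rewrite mem_seq1 (negPf ka).
rewrite last_rcons in last_k last_a; subst z.
have k_m : k \in m by move: k_am; rewrite in_cons (negPf ka) mem_rcons in_cons (negPf ka).
have [c /andP[ca ck]] := exists_third a k n_gt2.
exists (a :: m); last exact: shortcuts_to_backtrack ka ca ck.
split; last by rewrite /= size_rcons; lia.
split=> // v; move: (cover_am v).
by rewrite !in_cons mem_rcons in_cons orbA orbb.
Qed.

Lemma shortcut s : (2 < n)%N -> covering_walk s ->
  exists2 s', covering_walk s' /\ uniq s' & shortcuts_to s s'.
Proof.
move=> n_gt2; have [N] := ubnP (size s); elim: N s => // N IH s size_s walk_s.
case: (boolP (uniq s)) => [uniq_s | /not_uniq_rot [r [k [t [rot_s k_t]]]]].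
  by exists s => //; apply: shortcuts_to_eq.
have walk_kt : covering_walk (k :: t) by rewrite -rot_s; apply: covering_walk_rot.
have [s1 [walk_s1 size_s1] short_s1] := shortcut_repeated n_gt2 walk_kt k_t.
have [|s' s'_ok short_s'] := IH s1 _ walk_s1.
  by move: size_s size_s1; rewrite -(size_rot r s) rot_s /=; lia.
exists s' => //; apply: shortcuts_to_trans short_s'; apply: shortcuts_to_trans short_s1.
by apply: shortcuts_to_eq => i j; rewrite -rot_s edge_mult_rot.
Qed.

End Shortcutting.

Lemma uniq_cycle_neq (T : eqType) (s : seq T) :
  uniq s -> (1 < size s)%N -> cycle (fun a b => a != b) s.
Proof.
case: s => [//|x [//|y s]] uniq_xys _.
rewrite (cycle_path x) /=; apply/andP; split.
  case/andP: uniq_xys => x_ys _; apply: contraNneq x_ys => <-; exact: mem_last.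
by apply: (pairwise_sorted (s := x :: y :: s)); rewrite -uniq_pairwise.
Qed.

Section WalksAndTours.
Variable n : nat.
Implicit Types (s : seq 'I_n) (w t : {ffun edge n -> 'I_3}).

Lemma vec_at_walk_count w s i j :
  (forall e, (w e : nat) = walk_count s e) -> i != j -> vec_at w i j = edge_mult s i j.
Proof.
move=> w_s ij; rewrite /vec_at /at2; case: insubP => [e _ e_ij|] /=.
  by rewrite w_s /walk_count e_ij.
by rewrite cards2 ij.
Qed.

Lemma walk_count_uniq_le2 s e : uniq s -> (walk_count s e <= 2)%N.
Proof.
move=> uniq_s; rewrite /walk_count.
apply: (@leq_trans (count (mem (val e)) (unzip1 (cyc_pairs s)))).
  by rewrite count_map; apply: sub_count => p /eqP <-; rewrite /= set21.
have card_e : #|val e| = 2%N by apply/eqP; exact: valP e.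
rewrite unzip1_zip ?size_rot // -size_filter.
apply: (@leq_trans #|val e|); last by rewrite card_e.
rewrite cardE; apply: uniq_leq_size; first exact: filter_uniq.
by move=> v; rewrite mem_filter mem_enum => /andP[].
Qed.

Lemma tour_is_walk t : (2 < n)%N -> is_tour t -> is_walk t.
Proof.
move=> n_gt2 [s [size_s uniq_s cover_s t_s]]; exists s; split=> //.
by apply: uniq_cycle_neq => //; apply: leq_trans size_s.
Qed.

Lemma walk_shortcuts_to_tour (R : realType) w : (2 < n)%N -> is_walk w ->
  exists t (lam : edge n -> 'I_n -> R), [/\ is_tour t, lam_nonneg lam &
    forall i j, i != j -> (vec_at w i j)%:R = (vec_at t i j)%:R + lam_load lam i j].
Proof.
move=> n_gt2 [s [cyc_s cover_s w_s]].
have [s' [[_ cover_s'] uniq_s'] [lam [lam_ge0 s_s']]] :=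
  shortcut R n_gt2 (conj cyc_s cover_s).
pose t : {ffun edge n -> 'I_3} := [ffun e => inord (walk_count s' e)].
have t_s' e : (t e : nat) = walk_count s' e.
  by rewrite ffunE inordK // ltnS walk_count_uniq_le2.
exists t, lam; split=> // [|i j ij].
  exists s'; split=> //.
  have := uniq_leq_size (enum_uniq 'I_n) (fun v _ => cover_s' v).
  by rewrite size_enum_ord; apply: leq_trans.
by rewrite (vec_at_walk_count w_s ij) (vec_at_walk_count t_s' ij) s_s'.
Qed.

End WalksAndTours.

Lemma sum_pushforward (R : pzSemiRingType) (I : finType) (P Q : pred I) (f : I -> I)
    (g mu : I -> R) : (forall w, P w -> Q (f w)) ->
  \sum_(t | Q t) g t * \sum_(w | P w && (f w == t)) mu w = \sum_(w | P w) g (f w) * mu w.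
Proof.
move=> PQ; rewrite [RHS](partition_big f Q) //; apply: eq_bigr => t _.
by rewrite big_distrr; apply: eq_bigr => w /andP[_ /eqP ->].
Qed.

Section LPTransfer.
Variables (R : realType) (n : nat) (x : edge n -> R).
Hypothesis n_gt2 : (2 < n)%N.
Implicit Types (lam : edge n -> 'I_n -> R) (mu : {ffun edge n -> 'I_3} -> R).

Let decomposition (w t : {ffun edge n -> 'I_3}) lam :=
  [/\ is_tour t, lam_nonneg lam &
      forall i j, i != j -> (vec_at w i j)%:R = (vec_at t i j)%:R + lam_load lam i j].

Lemma walk_decomposition : exists (T : {ffun edge n -> 'I_3} -> {ffun edge n -> 'I_3})
    (L : {ffun edge n -> 'I_3} -> edge n -> 'I_n -> R),
  forall w, is_walk w -> decomposition w (T w) (L w).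
Proof.
have decomp w : exists tl, is_walk w -> decomposition w tl.1 tl.2.
  have [walk_w | nwalk_w] := pselect (is_walk w); last by exists (w, fun _ _ => 0).
  by have [t [lam decomp_w]] := walk_shortcuts_to_tour R n_gt2 walk_w; exists (t, lam).
by have [TL TL_ok] := choice decomp; exists (fst \o TL), (snd \o TL).
Qed.

Lemma walk_to_tour_feasible lam mu : DOPT_feasible (@is_walk n) x lam mu ->
  exists lam' mu', DOPT_feasible (@is_tour n) x lam' mu' /\
    DOPT_objective (@is_tour n) mu' = DOPT_objective (@is_walk n) mu.
Proof.
rewrite DOPT_feasibleE => -[load_le lam_ge0 mu_ge0].
have [T [L TL_ok]] := walk_decomposition.
have walk_tour w : `[< is_walk w >] -> `[< is_tour (T w) >].
  by move=> /asboolP /TL_ok[tour_Tw _ _]; apply/asboolP.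
pose lam' e k := lam e k + \sum_(w | `[< is_walk w >]) mu w * L w e k.
pose mu' t := \sum_(w | `[< is_walk w >] && (T w == t)) mu w.
exists lam', mu'; split; last first.
  by rewrite /DOPT_objective [RHS](partition_big T (fun t => `[< is_tour t >])).
rewrite DOPT_feasibleE; split.
- move=> i j ij.
  suff -> : lam_load lam' i j + mu_load (@is_tour n) mu' i j =
            lam_load lam i j + mu_load (@is_walk n) mu i j by exact: load_le.
  rewrite /lam' lam_loadD lam_load_sum /mu_load sum_pushforward // -addrA -big_split /=.
  by congr (_ + _); apply: eq_bigr => w /asboolP /TL_ok[_ _ ->] //; lra.
- move=> e k ke; rewrite addr_ge0 ?lam_ge0 // sumr_ge0 // => w /asboolP walk_w.
  by case: (TL_ok w walk_w) => _ L_ge0 _; rewrite mulr_ge0 ?mu_ge0 ?L_ge0.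
- by move=> t _; rewrite sumr_ge0 // => w /andP[/asboolP /mu_ge0].
Qed.

Lemma tour_to_walk_feasible lam mu : DOPT_feasible (@is_tour n) x lam mu ->
  exists mu', DOPT_feasible (@is_walk n) x lam mu' /\
    DOPT_objective (@is_walk n) mu' = DOPT_objective (@is_tour n) mu.
Proof.
rewrite DOPT_feasibleE => -[load_le lam_ge0 mu_ge0].
pose mu' w := if `[< is_tour w >] then mu w else 0.
have walk_sum (F : {ffun edge n -> 'I_3} -> R) :
    \sum_(w | `[< is_walk w >]) F w * mu' w = \sum_(t | `[< is_tour t >]) F t * mu t.
  rewrite big_mkcond [RHS]big_mkcond; apply: eq_bigr => w _; rewrite /mu'.
  case: (asboolP (is_tour w)) => [tour_w | _]; last by case: asboolP; rewrite ?mulr0.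
  by rewrite (asboolT (tour_is_walk n_gt2 tour_w)).
exists mu'; split.
  rewrite DOPT_feasibleE; split=> // [i j ij | w _]; first by rewrite /mu_load walk_sum load_le.
  by rewrite /mu'; case: asboolP => // /mu_ge0.
have := walk_sum (fun _ => 1); under eq_bigr do rewrite mul1r.
by under [RHS]eq_bigr do rewrite mul1r.
Qed.

End LPTransfer.

Lemma ler_sum_term (V : numDomainType) (I : finType) (P : pred I) (F : I -> V) i0 :
  (forall i, P i -> 0 <= F i) -> P i0 -> F i0 <= \sum_(i | P i) F i.
Proof.
move=> F_ge0 P_i0; rewrite (bigD1 i0) //= lerDl.
by apply: sumr_ge0 => i /andP[P_i _]; exact: F_ge0.
Qed.

Lemma ler_sum2_term (V : numDomainType) (I J : finType) (P : pred I) (Q : I -> pred J)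
    (F : I -> J -> V) i0 j0 : (forall i j, P i -> Q i j -> 0 <= F i j) ->
  P i0 -> Q i0 j0 -> F i0 j0 <= \sum_(i | P i) \sum_(j | Q i j) F i j.
Proof.
move=> F_ge0 P_i0 Q_j0; apply: le_trans (ler_sum_term (F_ge0 i0 ^~ P_i0) Q_j0) _.
by apply: ler_sum_term P_i0 => i P_i; apply: sumr_ge0 => j; apply: F_ge0.
Qed.

Section DistinctTriples.
Variables (V : zmodType) (n : nat).
Implicit Type F : 'I_n -> 'I_n -> 'I_n -> V.

Definition sum_distinct3 F :=
  \sum_i \sum_(j | j != i) \sum_(k | (k != i) && (k != j)) F i j k.

Let distinct3 (i j k : 'I_n) := [&& j != i, k != i & k != j].

Let sum_distinct3E F :
  sum_distinct3 F = \sum_i \sum_j \sum_k (if distinct3 i j k then F i j k else 0).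
Proof.
apply: eq_bigr => i _; rewrite big_mkcond; apply: eq_bigr => j _.
by rewrite /distinct3; case: (j != i); rewrite ?big_mkcond // big1_eq.
Qed.

Lemma sum_distinct3_lin F1 F2 F3 :
  sum_distinct3 (fun i j k => - F1 i j k + F2 i j k + F3 i j k) =
  - sum_distinct3 F1 + sum_distinct3 F2 + sum_distinct3 F3.
Proof.
rewrite !sum_distinct3E -sumrN -!big_split; apply: eq_bigr => i _.
rewrite -sumrN -!big_split; apply: eq_bigr => j _.
rewrite -sumrN -!big_split; apply: eq_bigr => k _.
by case: distinct3; rewrite //= oppr0 !addr0.
Qed.

Lemma sum_distinct3_swap F : sum_distinct3 (fun i j k => F i k j) = sum_distinct3 F.
Proof.
rewrite !sum_distinct3E; apply: eq_bigr => i _; rewrite [LHS]exchange_big.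
apply: eq_bigr => j _; apply: eq_bigr => k _.
by congr (if _ then _ else _); rewrite /distinct3; do ![case: eqP => //= ?; subst].
Qed.

Lemma sum_distinct3_rot F : sum_distinct3 (fun i j k => F j k i) = sum_distinct3 F.
Proof.
rewrite !sum_distinct3E [LHS]exchange_big; apply: eq_bigr => i _.
rewrite [LHS]exchange_big; apply: eq_bigr => j _; apply: eq_bigr => k _.
by congr (if _ then _ else _); rewrite /distinct3; do ![case: eqP => //= ?; subst].
Qed.

End DistinctTriples.

Section Boundedness.
Variables (R : realType) (n : nat) (V : {ffun edge n -> 'I_3} -> Prop) (x : edge n -> R).
Variables (lam : edge n -> 'I_n -> R) (mu : {ffun edge n -> 'I_3} -> R).

Definition x_total : R := \sum_i \sum_(j | j != i) at2 0 x i j.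

Let lam_at i j k := at2 0 (fun e => lam e k) i j.

(* Each multiplier enters one constraint negatively and two positively, so it
   survives in the sum of all constraints. *)
Lemma sum_lam_load : \sum_i \sum_(j | j != i) lam_load lam i j = sum_distinct3 lam_at.
Proof.
rewrite -[LHS]/(sum_distinct3 (fun i j k => - lam_at i j k + lam_at i k j + lam_at j k i)).
by rewrite sum_distinct3_lin (sum_distinct3_swap lam_at) (sum_distinct3_rot lam_at) addNr add0r.
Qed.

Hypothesis feas : DOPT_feasible V x lam mu.

Let lam_at_ge0 i j k : (k != i) && (k != j) -> 0 <= lam_at i j k.
Proof.
case: feas => _ lam_ge0 _ /andP[ki kj]; rewrite /lam_at /at2.
by case: insubP => [e _ e_ij|] //=; apply: lam_ge0; rewrite e_ij !inE negb_or ki kj.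
Qed.

Let mu_load_ge0 i j : 0 <= mu_load V mu i j.
Proof.
case: feas => _ _ mu_ge0.
by apply: sumr_ge0 => w /asboolP V_w; rewrite mulr_ge0 ?mu_ge0.
Qed.

Let sum_lam_ge0 i j : 0 <= \sum_(k | (k != i) && (k != j)) lam_at i j k.
Proof. by apply: sumr_ge0 => k; apply: lam_at_ge0. Qed.

Let sum_constraints_le :
  sum_distinct3 lam_at + \sum_i \sum_(j | j != i) mu_load V mu i j <= x_total.
Proof.
rewrite -sum_lam_load -big_split; apply: ler_sum => i _.
rewrite -big_split; apply: ler_sum => j ji.
by case: feas => load_le _ _; apply: load_le; rewrite eq_sym.
Qed.

Lemma feasible_lam_le (e : edge n) k : k \notin val e -> lam e k <= x_total.
Proof.
have /cards2P[i [j [ij e_ij]]] := valP e; move=> ke.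
have k_ij : (k != i) && (k != j) by move: ke; rewrite e_ij !inE negb_or.
rewrite -(at2_val 0 (fun e => lam e k) e_ij) -/(lam_at i j k).
apply: le_trans _ sum_constraints_le; rewrite -[lam_at i j k]addr0 lerD //; last first.
  by apply: sumr_ge0 => i' _; apply: sumr_ge0.
apply: le_trans (ler_sum_term (@lam_at_ge0 i j) k_ij) _.
by rewrite /sum_distinct3 (ler_sum2_term (fun i' j' _ _ => sum_lam_ge0 i' j')) // eq_sym.
Qed.

Lemma feasible_mu_le w : V w -> (exists i j, i != j /\ (0 < vec_at w i j)%N) ->
  mu w <= x_total.
Proof.
move=> V_w [i [j [ij w_ij]]]; case: feas => _ _ mu_ge0.
apply: le_trans (_ : (vec_at w i j)%:R * mu w <= _).
  by rewrite -{1}(mul1r (mu w)) ler_wpM2r ?mu_ge0 // ler1n.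
apply: le_trans _ sum_constraints_le; rewrite -[_ * mu w]add0r lerD //.
  by do 2!(apply: sumr_ge0 => ? _); apply: sum_lam_ge0.
have ji : j != i by rewrite eq_sym.
apply: le_trans _ (ler_sum2_term (fun i j _ _ => mu_load_ge0 i j) isT ji).
apply: ler_sum_term => [w' /asboolP V_w'|]; last exact/asboolP.
by rewrite mulr_ge0 ?mu_ge0.
Qed.

End Boundedness.

Section ClosedConstraints.
Variables (R : realType) (T : topologicalType).
Local Open Scope classical_set_scope.

Lemma continuous_sum (I : finType) (P : pred I) (F : I -> T -> R) :
  (forall i, continuous (F i)) -> continuous (fun z => \sum_(i | P i) F i z).
Proof.
move=> F_cont; apply: (@continuous_big _ _ +%R 0 P add_continuous).
by move=> i _; exact: F_cont.
Qed.

Lemma continuous_add (f g : T -> R) :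
  continuous f -> continuous g -> continuous (fun z => f z + g z).
Proof. by move=> f_cont g_cont z; exact: cvgD (f_cont z) (g_cont z). Qed.

Lemma continuous_mull (c : R) (f : T -> R) :
  continuous f -> continuous (fun z => c * f z).
Proof. by move=> f_cont z; exact: cvgMl_tmp (f_cont z). Qed.

Lemma continuous_at2 n (G : edge n -> T -> R) i j :
  (forall e, continuous (G e)) -> continuous (fun z => at2 0 (fun e => G e z) i j).
Proof. by rewrite /at2; case: insub => [e|] G_cont //=; exact: cst_continuous. Qed.

Lemma closed_le_family (I : Type) (P : set I) (f g : I -> T -> R) :
  (forall c, continuous (f c)) -> (forall c, continuous (g c)) ->
  closed [set z | forall c, P c -> f c z <= g c z].
Proof.
move=> f_cont g_cont.
rewrite [X in closed X](_ : _ = bigcap P (fun c => [set z | f c z <= g c z])) //.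
apply: closed_bigI => c _.
have -> : [set z | f c z <= g c z] = (fun z => g c z - f c z) @^-1` [set r | 0 <= r].
  by apply/seteqP; split=> z /=; rewrite subr_ge0.
apply: preimage_closed (@closed_ge _ 0) => z _.
by apply: continuousB; [exact: g_cont | exact: f_cont].
Qed.

End ClosedConstraints.

Section OptimumAttained.
Import ArrowAsProduct.
Local Open Scope classical_set_scope.
Variables (R : realType) (n : nat) (V : {ffun edge n -> 'I_3} -> Prop) (x : edge n -> R).
Hypothesis x_ge0 : forall e, 0 <= x e.
Hypothesis V_nonzero : forall w, V w -> exists i j, i != j /\ (0 < vec_at w i j)%N.

(* A pair (lam, mu) is encoded as one point of R^Idx, with the product topology. *)
Let Idx := ((edge n * 'I_n) + {ffun edge n -> 'I_3})%type.
Let lam_of (z : Idx -> R) e k := z (inl (e, k)).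
Let mu_of (z : Idx -> R) w := z (inr w).

Let feasible := [set z : Idx -> R | DOPT_feasible V x (lam_of z) (mu_of z)].
Let box := [set z : Idx -> R | forall c, `[0, x_total x] (z c)].

Let proj_cont c : continuous (fun z : Idx -> R => z c).
Proof. exact: (@proj_continuous _ (fun _ => R) c). Qed.

Let load_cont i j :
  continuous (fun z => lam_load (lam_of z) i j + mu_load V (mu_of z) i j).
Proof.
have at2_cont l a b : continuous (fun z => at2 0 (fun e => lam_of z e l) a b).
  by apply: continuous_at2 => e; apply: proj_cont.
apply: continuous_add; [apply: continuous_sum => k | apply: continuous_sum => w].
  by do 2!apply: continuous_add => //; move=> z; apply: continuousN; apply: at2_cont.
by apply: continuous_mull; apply: proj_cont.
Qed.

Let closed_feasible : closed feasible.
Proof.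
have -> : feasible =
  [set z | forall p : 'I_n * 'I_n, p.1 != p.2 ->
     lam_load (lam_of z) p.1 p.2 + mu_load V (mu_of z) p.1 p.2 <= at2 0 x p.1 p.2] `&`
  [set z | forall p : edge n * 'I_n, p.2 \notin val p.1 -> 0 <= lam_of z p.1 p.2] `&`
  [set z | forall w, V w -> 0 <= mu_of z w].
  apply/seteqP; split=> z; rewrite /feasible /= DOPT_feasibleE.
    case=> load_le lam_ge0 mu_ge0; split=> //; split=> [[i j] | [e k]].
    - exact: load_le.
    - exact: lam_ge0.
  case=> [[load_le lam_ge0] mu_ge0]; split=> // [i j ij | e k ke].
  - exact: (load_le (i, j)).
  - exact: (lam_ge0 (e, k)).
do 2?apply: closedI; apply: closed_le_family => *;
  by [apply: load_cont | apply: cst_continuous | apply: proj_cont].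
Qed.

Let compact_feasible_box : compact (box `&` feasible).
Proof.
apply: compact_closedI closed_feasible.
exact: (@tychonoff Idx (fun _ => R) _ (fun _ => @segment_compact R 0 (x_total x))).
Qed.

Let x_total_ge0 : 0 <= x_total x.
Proof. by do 2!(apply: sumr_ge0 => ? _); rewrite /at2; case: insub => [e|] //=. Qed.

(* Coordinates that occur in no constraint are set to 0, so that
   feasible_lam_le and feasible_mu_le bound all of them. *)
Let clip lam mu : Idx -> R := fun c =>
  match c with
  | inl (e, k) => if k \in val e then 0 else lam e k
  | inr w => if `[< V w >] then mu w else 0
  end.

Let clip_feasible lam mu : DOPT_feasible V x lam mu ->
  (box `&` feasible) (clip lam mu) /\
  DOPT_objective V (mu_of (clip lam mu)) = DOPT_objective V mu.
Proof.
move=> feas; have lam_le := feasible_lam_le feas; have mu_le := feasible_mu_le feas.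
move: feas; rewrite DOPT_feasibleE => -[load_le lam_ge0 mu_ge0].
have mu_clip F : \sum_(w | `[< V w >]) F w * mu_of (clip lam mu) w =
                 \sum_(w | `[< V w >]) F w * mu w.
  by apply: eq_bigr => w /asboolP V_w; rewrite /mu_of /= asboolT.
have lam_load_clip i j : i != j -> lam_load (lam_of (clip lam mu)) i j = lam_load lam i j.
  move=> ij; apply: eq_bigr => k /andP[ki kj]; rewrite /lam_of /=.
  congr (- _ + _ + _); apply: at2_ext => e -> /=; rewrite !inE.
  - by rewrite (negPf ki) (negPf kj).
  - by rewrite eq_sym (negPf ij) eq_sym (negPf kj).
  - by rewrite (negPf ij) eq_sym (negPf ki).
split; last first.
  have := mu_clip (fun _ => 1); rewrite /DOPT_objective.
  by under eq_bigr do rewrite mul1r; under [in RHS]eq_bigr do rewrite mul1r.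
split.
  move=> [[e k]|w] /=; rewrite in_itv /=.
    by case: ifPn => [_|ke]; rewrite ?lexx ?x_total_ge0 ?lam_ge0 ?lam_le.
  case: asboolP => [V_w|_]; last by rewrite lexx x_total_ge0.
  by rewrite mu_ge0 // mu_le //; apply: V_nonzero.
rewrite /feasible /= DOPT_feasibleE; split=> [i j ij|e k ke|w V_w].
- by rewrite lam_load_clip // /mu_load mu_clip load_le.
- by rewrite /lam_of /= (negPf ke) lam_ge0.
- by rewrite /mu_of /= asboolT ?mu_ge0.
Qed.

Lemma DOPT_optimum_attained : exists lam mu, DOPT_feasible V x lam mu /\
  forall lam' mu', DOPT_feasible V x lam' mu' ->
    DOPT_objective V mu' <= DOPT_objective V mu.
Proof.
have zero_ok : (box `&` feasible) (fun _ => 0).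
  split=> [c|]; first by rewrite /= in_itv /= lexx x_total_ge0.
  rewrite /feasible /= DOPT_feasibleE; split=> // i j _.
  rewrite [lam_load _ _ _]lam_load0 /mu_load big1 ?addr0 => [|w _]; last by rewrite mulr0.
  by rewrite /at2; case: insub => [e|] //=.
have obj_cont : continuous (fun z : Idx -> R => DOPT_objective V (mu_of z)).
  by apply: continuous_sum => w; apply: proj_cont.
have [z /set_mem[_ feas_z] z_max] :=
  compact_EVT_max (ex_intro _ _ zero_ok) compact_feasible_box (continuous_subspaceT obj_cont).
exists (lam_of z), (mu_of z); split=> // lam mu feas.
have [clip_ok <-] := clip_feasible feas; exact: z_max (mem_set clip_ok).
Qed.

End OptimumAttained.

Lemma walk_nonzero n (w : {ffun edge n -> 'I_3}) : (1 < n)%N -> is_walk w ->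
  exists i j, i != j /\ (0 < vec_at w i j)%N.
Proof.
move=> n_gt1 [[|u [|v s]] [cyc_s cover_s w_s]].
- by have := cover_s (Ordinal n_gt1).
- have := cover_s (Ordinal n_gt1); have := cover_s (Ordinal (ltnW n_gt1)).
  by rewrite !mem_seq1 => /eqP <- /eqP.
have uv : u != v by case/andP: cyc_s.
exists u, v; split=> //.
by rewrite (vec_at_walk_count w_s uv) /edge_mult cyc_pairs_cons /= eqxx.
Qed.

Theorem mainTheorem7 (R : realType) (n : nat) (hn : (3 <= n)%N)
    (x : edge n -> R) :
  is_SEP_vertex x ->
  exists v : R, DOPT_opt_value (@is_walk n) x v /\ DOPT_opt_value (@is_tour n) x v.
Proof.
case=> -[_ _ x_01] _.
have x_ge0 e : 0 <= x e by case/andP: (x_01 e).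
have [lam [mu [feas opt]]] := DOPT_optimum_attained x_ge0 (fun w => walk_nonzero (ltnW hn)).
exists (DOPT_objective (@is_walk n) mu); split; first by split; [exists lam, mu | exact: opt].
split.
  have [lam' [mu' feas']] := walk_to_tour_feasible hn feas.
  by exists lam', mu'.
move=> lam' mu' /(tour_to_walk_feasible hn) [mu'' [feas'' <-]].
exact: opt feas''.
Qed.
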